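(* Let $\Lambda=(\mathcal{L}\subset\mathbb{R}^s,\mathbb{R}^n)$ be a generic cut-and-project scheme, where $\mathcal{L}$ has associated matrix $L\in\mathbb{R}^{s\times s}$. Let $W_A\in\mathbb{R}^{n\times n}$, $W_B\in\mathbb{R}^{(s-n)\times(s-n)}$ and $Q\in\mathbb{Q}^{s\times s}$ be non-singular matrices. Define $\widetilde L=\begin{pmatrix}W_A&O\\O&W_B\end{pmatrix}LQ^{-1}$ and $\widetilde{\mathcal{L}}=\{\widetilde L\mathbf{r}:\mathbf{r}\in\mathbb{Z}^s\}$. Then $\widetilde\Lambda=(\widetilde{\mathcal{L}}\subset\mathbb{R}^s,\mathbb{R}^n)$ is also a generic cut-and-project scheme.
   Context: A lattice $\mathcal{L}\subset\mathbb{R}^s$ is $\{L\mathbf{r}:\mathbf{r}\in\mathbb{Z}^s\}$ for a non-singular $L\in\mathbb{R}^{s\times s}$ (an associated matrix). For $1\le n<s$ the scheme $(\mathcal{L}\subset\mathbb{R}^s,\mathbb{R}^n)$ has projections $\pi_\parallel(\mathbf{x})=(x_1,\dots,x_n)^\top$, $\pi_\perp(\mathbf{x})=(x_{n+1},\dots,x_s)^\top$; it is generic if $\pi_\parallel|_{\mathcal{L}}$ and $\pi_\perp|_{\mathcal{L}}$ are injective and $\pi_\perp(\mathcal{L})$ is dense in $\mathbb{R}^{s-n}$. *)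

From HB Require Import structures.
From mathcomp Require Import all_boot all_order all_algebra.
From mathcomp Require Import all_classical all_reals all_analysis.
Set Implicit Arguments. Unset Strict Implicit. Unset Printing Implicit Defensive.
Import Order.TTheory GRing.Theory Num.Theory.
Import numFieldNormedType.Exports.
Local Open Scope ring_scope.
Local Open Scope classical_set_scope.

(* Ambient space R^s with s = n + m, vectors are column vectors 'cV[R]_(n+m). *)

Definition latpt (R : realType) (s : nat) (L : 'M[R]_s) (r : 'cV[int]_s) : 'cV[R]_s :=
  L *m map_mx (fun z : int => z%:~R) r.

Definition lattice (R : realType) (s : nat) (L : 'M[R]_s) : set 'cV[R]_s :=
  [set latpt L r | r in [set: 'cV[int]_s]].

Definition pi_par (R : realType) (n m : nat) (x : 'cV[R]_(n + m)) : 'cV[R]_n := usubmx x.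
Definition pi_perp (R : realType) (n m : nat) (x : 'cV[R]_(n + m)) : 'cV[R]_m := dsubmx x.

Definition generic_cps (R : realType) (n m : nat) (L : 'M[R]_(n + m)) : Prop :=
  [/\ {in lattice L &, injective (@pi_par R n m)},
      {in lattice L &, injective (@pi_perp R n m)} &
      dense (@pi_perp R n m @` lattice L)].

From HB Require Import structures.
From mathcomp Require Import all_boot all_order all_algebra.
From mathcomp Require Import all_classical all_reals all_analysis.
Import Order.TTheory GRing.Theory Num.Theory.
Import numFieldNormedType.Exports.
Local Open Scope ring_scope.

(* The transformation splits into two independent moves.  Right multiplication
   by a rational basis change [Q^-1] replaces the lattice by a commensurable
   one: clearing denominators, [d L Q^-1 Z^s] lies in [L Z^s] and
   [e L Z^s] lies in [L Q^-1 Z^s] for positive integers [d] and [e].  The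
   first inclusion transfers injectivity of both projections, the second
   transfers density of the internal projection.  Left multiplication by the
   block-diagonal [diag(WA, WB)] commutes with the projections up to the
   invertible maps [WA] and [WB], which preserve injectivity and, being
   homeomorphisms, density. *)

Section Density.
Local Open Scope classical_set_scope.
Context {T U : topologicalType}.

Lemma dense_subset {A B : set T} : A `<=` B -> dense A -> dense B.
Proof. by move=> AB dA O O0 oO; have [x [Ox /AB Bx]] := dA O O0 oO; exists x. Qed.

Lemma dense_image {f : T -> U} {g : U -> T} {S : set T} :
  continuous f -> cancel g f -> dense S -> dense (f @` S).
Proof.
move=> fc gK dS O [y Oy] oO.
have oO' : open (f @^-1` O) by move/continuousP : fc; apply.
have [|x [Ofx Sx]] := dS _ _ oO'; first by exists (g y); rewrite /preimage /= gK.
by exists (f x); split => //; exists x.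
Qed.

End Density.

Lemma continuous_mulmx {R : realType} {k l : nat} (A : 'M[R]_(k, l)) :
  continuous (fun x : 'cV[R]_l => A *m x).
Proof.
have -> : (fun x : 'cV[R]_l => A *m x) = fun x => \sum_j x j 0 *: col j A.
  apply/funext => x; apply/matrixP => i k'; rewrite !mxE summxE.
  by apply: eq_bigr => j _; rewrite !mxE (ord1 k') mulrC.
apply: continuous_big => [|j _]; first exact: add_continuous.
by move=> x; apply: continuousZr_tmp; exact: coord_continuous.
Qed.

Lemma rat_mx_scale_int {k l : nat} (M : 'M[rat]_(k, l)) :
  exists2 d : int, 0 < d & exists Z : 'M[int]_(k, l), d%:~R *: M = map_mx intr Z.
Proof.
exists (\prod_(p : 'I_k * 'I_l) denq (M p.1 p.2)).
  by apply: prodr_gt0 => p _; exact: denq_gt0.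
exists (\matrix_(i, j) (numq (M i j) *
          \prod_(p : 'I_k * 'I_l | p != (i, j)) denq (M p.1 p.2))).
apply/matrixP => i j; rewrite !mxE (bigD1 (i, j)) //= !rmorphM /= numqE.
by rewrite mulrC mulrA.
Qed.

Section Injectivity.
Local Open Scope classical_set_scope.

Lemma inj_in_scale {K : fieldType} {U V : lmodType K} {p : U -> V}
    {A B : set U} {d : K} :
  scalable p -> d != 0 -> {homo *:%R d : x / A x >-> B x} ->
  {in B &, injective p} -> {in A &, injective p}.
Proof.
move=> pZ d0 dAB pB x y /set_mem Ax /set_mem Ay pxy.
apply: (scalerI d0); apply: pB; rewrite ?inE; [exact: dAB | exact: dAB |].
by rewrite !pZ pxy.
Qed.

Lemma inj_in_image {T U : Type} {f : T -> T} {h : U -> U} {p : T -> U}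
    {A : set T} :
  (forall x, p (f x) = h (p x)) -> injective h ->
  {in A &, injective p} -> {in f @` A &, injective p}.
Proof.
move=> pf hI pA _ _ /set_mem [x Ax <-] /set_mem [y Ay <-].
by rewrite !pf => /hI /pA -> //; exact: mem_set.
Qed.

End Injectivity.

Section CutAndProject.
Local Open Scope classical_set_scope.
Context {R : realType}.

Lemma pi_parZ {n m : nat} : scalable (@pi_par R n m).
Proof. by move=> a x; apply/matrixP => i j; rewrite !mxE. Qed.

Lemma pi_perpZ {n m : nat} : scalable (@pi_perp R n m).
Proof. by move=> a x; apply/matrixP => i j; rewrite !mxE. Qed.

Lemma pi_par_block_diag (n m : nat) (WA : 'M[R]_n) (WB : 'M[R]_m)
    (x : 'cV[R]_(n + m)) :
  pi_par (block_mx WA 0 0 WB *m x) = WA *m pi_par x.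
Proof. by rewrite /pi_par -[x]vsubmxK mul_block_col !col_mxKu mul0mx addr0. Qed.

Lemma pi_perp_block_diag (n m : nat) (WA : 'M[R]_n) (WB : 'M[R]_m)
    (x : 'cV[R]_(n + m)) :
  pi_perp (block_mx WA 0 0 WB *m x) = WB *m pi_perp x.
Proof. by rewrite /pi_perp -[x]vsubmxK mul_block_col !col_mxKd mul0mx add0r. Qed.

Lemma lattice_mulmxl {s : nat} (W L : 'M[R]_s) :
  lattice (W *m L) = mulmx W @` lattice L.
Proof.
by rewrite /lattice image_comp; apply: eq_imagel => r _; rewrite /latpt /= mulmxA.
Qed.

Lemma lattice_rat_scale {s : nat} (L : 'M[R]_s) {P : 'M[rat]_s}
    {d : int} {Z : 'M[int]_s} :
  d%:~R *: P = map_mx intr Z ->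
  {homo *:%R (d%:~R : R) : x / lattice (L *m map_mx ratr P) x >-> lattice L x}.
Proof.
move=> dPZ _ [r _ <-]; exists (Z *m r) => //.
have ZR : map_mx intr Z = d%:~R *: map_mx (@ratr R) P.
  rewrite -[d%:~R](rmorph_int (@ratr R)) -map_mxZ dPZ -map_mx_comp.
  by apply/matrixP => i j; rewrite !mxE /= ratr_int.
by rewrite /latpt map_mxM ZR -scalemxAl -scalemxAr mulmxA.
Qed.

Lemma generic_cps_rat_basis (n m : nat) (L : 'M[R]_(n + m))
    (Q : 'M[rat]_(n + m)) :
  Q \in unitmx -> generic_cps L -> generic_cps (L *m map_mx ratr (invmx Q)).
Proof.
move=> uQ [ipar iperp dperp].
have [d d0 [Z dZ]] := rat_mx_scale_int (invmx Q).
have [e e0 [Z' eZ']] := rat_mx_scale_int Q.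
set K := L *m _.
have dKL := lattice_rat_scale L dZ.
have eLK : {homo *:%R (e%:~R : R) : x / lattice L x >-> lattice K x}.
  have KL : K *m map_mx ratr Q = L.
    by rewrite -mulmxA -map_mxM mulVmx // map_mx1 mulmx1.
  by have := lattice_rat_scale K eZ'; rewrite KL.
have d0R : (d%:~R : R) != 0 by rewrite intr_eq0 gt_eqF.
have e0R : (e%:~R : R) != 0 by rewrite intr_eq0 gt_eqF.
split.
- exact: inj_in_scale pi_parZ d0R dKL ipar.
- exact: inj_in_scale pi_perpZ d0R dKL iperp.
- have eC : continuous (fun y : 'cV[R]_m => e%:~R *: y).
    exact: scaler_continuous.
  apply: dense_subset (dense_image eC (scalerKV e0R) dperp).
  move=> _ [_ [x Lx <-] <-].
  by exists (e%:~R *: x); [exact: eLK | exact: pi_perpZ].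
Qed.

Lemma generic_cps_block_diag (n m : nat) (K : 'M[R]_(n + m))
    (WA : 'M[R]_n) (WB : 'M[R]_m) :
  WA \in unitmx -> WB \in unitmx ->
  generic_cps K -> generic_cps (block_mx WA 0 0 WB *m K).
Proof.
move=> uA uB [ipar iperp dperp]; rewrite /generic_cps lattice_mulmxl; split.
- apply: inj_in_image ipar; first exact: pi_par_block_diag.
  exact: can_inj (mulKmx uA).
- apply: inj_in_image iperp; first exact: pi_perp_block_diag.
  exact: can_inj (mulKmx uB).
- apply: dense_subset (dense_image (continuous_mulmx WB) (mulKVmx uB) dperp).
  move=> _ [_ [x Kx <-] <-].
  by exists (block_mx WA 0 0 WB *m x); [exists x | exact: pi_perp_block_diag].
Qed.

End CutAndProject.

Theorem lemma2 (R : realType) (n m : nat) (hn : (0 < n)%N) (hm : (0 < m)%N)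
  (L : 'M[R]_(n + m)) (WA : 'M[R]_n) (WB : 'M[R]_m) (Q : 'M[rat]_(n + m)) :
  L \in unitmx -> WA \in unitmx -> WB \in unitmx -> Q \in unitmx ->
  generic_cps L ->
  generic_cps (block_mx WA 0 0 WB *m L *m map_mx (fun q : rat => ratr q) (invmx Q)).
Proof.
move=> _ uA uB uQ gL; rewrite -mulmxA.
by apply: generic_cps_block_diag => //; exact: generic_cps_rat_basis.
Qed.
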